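(* Let $T$ be a split Leibniz triple system with symmetric root system $\Lambda^1$, suppose $\Lambda^0$ is symmetric, and fix $\alpha_0\in\Lambda^1$. Let $\alpha,\beta,\gamma\in\Lambda^1_{\alpha_0}\cup\{0\}$ with $\alpha+\beta+\gamma=0$, and let $\delta,\epsilon\in\Lambda^1\cup\{0\}$. Then: (1) if $\{\{T_\alpha,T_\beta,T_\gamma\},T_\delta,T_\epsilon\}\neq0$ then $\delta,\epsilon,\delta+\epsilon\in\Lambda^1_{\alpha_0}\cup\{0\}$; (2) if $\{T_\delta,\{T_\alpha,T_\beta,T_\gamma\},T_\epsilon\}\neq0$ then $\delta,\epsilon,\delta+\epsilon\in\Lambda^1_{\alpha_0}\cup\{0\}$; (3) if $\{T_\delta,T_\epsilon,\{T_\alpha,T_\beta,T_\gamma\}\}\neq0$ then $\delta,\epsilon,\delta+\epsilon\in\Lambda^1_{\alpha_0}\cup\{0\}$.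
   Context: A Leibniz triple system is a vector space $T$ over a field $\mathbb{K}$ with a trilinear product $\{\cdot,\cdot,\cdot\}$ satisfying, for all $a,b,c,d,e\in T$: $\{a,\{b,c,d\},e\}=\{\{a,b,c\},d,e\}-\{\{a,c,b\},d,e\}-\{\{a,d,b\},c,e\}+\{\{a,d,c\},b,e\}$ and $\{a,b,\{c,d,e\}\}=\{\{a,b,c\},d,e\}-\{\{a,b,d\},c,e\}-\{\{a,b,e\},c,d\}+\{\{a,b,e\},d,c\}$. Its standard embedding is the right Leibniz algebra $L=L^0\oplus L^1$ ($L^0$ the span of symbols $x\otimes y$, $L^1=T$) with product $[(x\otimes y,z),(u\otimes v,w)]=(\{x,y,u\}\otimes v-\{x,y,v\}\otimes u+z\otimes w,\ \{x,y,w\}+\{z,u,v\}-\{z,v,u\})$; so $[x,y]=x\otimes y$ and $\{x,y,z\}=[[x,y],z]$ for $x,y,z\in T$. Let $H^0$ be a maximal abelian subalgebra of $L^0$; for $\alpha\in(H^0)^*$ put $T_\alpha=\{t\in T:[t,h]=\alpha(h)t\ \forall h\in H^0\}$, $L^0_\alpha=\{v\in L^0:[v,h]=\alpha(h)v\ \forall h\in H^0\}$, $\Lambda^1=\{\alpha\neq0:T_\alpha\neq0\}$, $\Lambda^0=\{\alpha\neq0:L^0_\alpha\neq0\}$. $T$ is split (w.r.t. $H^0$) if $T=T_0\oplus\bigoplus_{\alpha\in\Lambda^1}T_\alpha$, $\{T_0,T_0,T_0\}=0$ and $\{T_\alpha,T_{-\alpha},T_0\}=0$ for all $\alpha\in\Lambda^1$.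 A set $\Lambda\subset(H^0)^*$ is symmetric if $\alpha\in\Lambda$ implies $-\alpha\in\Lambda$. Two roots $\alpha,\beta\in\Lambda^1$ are connected if there is a family $\alpha_1,\dots,\alpha_{2n+1}\in\Lambda^1\cup\{0\}$ with: $\alpha_1+\dots+\alpha_{2k+1}\in\Lambda^1$ for $k=0,\dots,n$; $\alpha_1+\dots+\alpha_{2k}\in\Lambda^0$ for $k=1,\dots,n$; $\alpha_1=\alpha$ and $\alpha_1+\dots+\alpha_{2n+1}\in\{\beta,-\beta\}$. $\Lambda^1_{\alpha_0}$ denotes the set of $\beta\in\Lambda^1$ connected with $\alpha_0$. *)

From HB Require Import structures.
From mathcomp Require Import all_boot all_order all_algebra.
Set Implicit Arguments. Unset Strict Implicit. Unset Printing Implicit Defensive.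
Import GRing.Theory.
Local Open Scope ring_scope.

Section LTS.
Variables (K : fieldType) (T : lmodType K) (tp : T -> T -> T -> T).

Definition isLTS : Prop :=
  (forall (c : K) x x' y z, tp (c *: x + x') y z = c *: tp x y z + tp x' y z) /\
  (forall (c : K) x y y' z, tp x (c *: y + y') z = c *: tp x y z + tp x y' z) /\
  (forall (c : K) x y z z', tp x y (c *: z + z') = c *: tp x y z + tp x y z') /\
  (forall a b c d e, tp a (tp b c d) e =
      tp (tp a b c) d e - tp (tp a c b) d e - tp (tp a d b) c e + tp (tp a d c) b e) /\
  (forall a b c d e, tp a b (tp c d e) =
      tp (tp a b c) d e - tp (tp a b d) c e - tp (tp a b e) c d + tp (tp a b e) d c).

(* Elements of L^0 are represented by finite sums  sum_i x_i (x) y_i,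
   i.e. by sequences of pairs (x_i, y_i); scalars are absorbed in x_i.
   Two representatives denote the same element of L^0 iff they act in the same
   way on T = L^1 from both sides (L^0 = (T (x) T)/K, K = the elements acting
   trivially on T in the standard embedding). *)
Definition L0 := seq (T * T).

Definition actl (s : L0) (w : T) : T := \sum_(p <- s) tp p.1 p.2 w.
(* [z, v] for z in T, v in L^0 *)
Definition actr (s : L0) (z : T) : T := \sum_(p <- s) (tp z p.1 p.2 - tp z p.2 p.1).

Definition eqL (s s' : L0) : Prop :=
  forall w, actl s w = actl s' w /\ actr s w = actr s' w.
Definition zeroL (s : L0) : Prop := eqL s [::].

Definition scaleL (c : K) (s : L0) : L0 := [seq (c *: p.1, p.2) | p <- s].

(* [x (x) y, u (x) v] = {x,y,u} (x) v - {x,y,v} (x) u, extended bilinearly *)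
Definition brL (s s' : L0) : L0 :=
  flatten [seq flatten [seq [:: (tp p.1 p.2 q.1, q.2); (- tp p.1 p.2 q.2, q.1)]
                        | q <- s'] | p <- s].

(* H is an abelian subalgebra of L^0 (as a predicate on representatives,
   invariant under the identification eqL). *)
Definition abSub (H : L0 -> Prop) : Prop :=
  H [::] /\
  (forall s s', H s -> eqL s s' -> H s') /\
  (forall s s', H s -> H s' -> H (s ++ s')) /\
  (forall c s, H s -> H (scaleL c s)) /\
  (forall s s', H s -> H s' -> H (brL s s')) /\
  (forall s s', H s -> H s' -> zeroL (brL s s')).

Definition maxAbSub (H : L0 -> Prop) : Prop :=
  abSub H /\ forall H', abSub H' -> (forall s, H s -> H' s) -> forall s, H' s -> H s.

(* Elements of (H^0)^*: linear functionals on H, represented canonically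
   (well defined on L^0-classes and set to 0 outside H). *)
Definition isDual (H : L0 -> Prop) (f : L0 -> K) : Prop :=
  (forall s, ~ H s -> f s = 0) /\
  (forall s s', H s -> eqL s s' -> f s = f s') /\
  (forall c s s', H s -> H s' -> f (scaleL c s ++ s') = c * f s + f s').

Definition f0 : L0 -> K := fun _ => 0.
Definition fadd (f g : L0 -> K) : L0 -> K := fun s => f s + g s.
Definition fopp (f : L0 -> K) : L0 -> K := fun s => - f s.
Definition psum (a : nat -> L0 -> K) (m : nat) : L0 -> K :=
  fun s => \sum_(i < m) a i s.

Definition rootT (H : L0 -> Prop) (f : L0 -> K) (t : T) : Prop :=
  forall h, H h -> actr h t = f h *: t.
Definition rootL0 (H : L0 -> Prop) (f : L0 -> K) (v : L0) : Prop :=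
  forall h, H h -> eqL (brL v h) (scaleL (f h) v).

Definition Lam1 (H : L0 -> Prop) (f : L0 -> K) : Prop :=
  isDual H f /\ f <> f0 /\ exists t, t <> 0 /\ rootT H f t.
Definition Lam0 (H : L0 -> Prop) (f : L0 -> K) : Prop :=
  isDual H f /\ f <> f0 /\ exists v, ~ zeroL v /\ rootL0 H f v.

Definition Lam1z (H : L0 -> Prop) (f : L0 -> K) : Prop := f = f0 \/ Lam1 H f.

Definition isSplit (H : L0 -> Prop) : Prop :=
  (forall t : T, exists (n : nat) (a : nat -> L0 -> K) (ts : nat -> T),
      (forall i, (i < n)%N -> Lam1z H (a i) /\ rootT H (a i) (ts i)) /\
      t = \sum_(i < n) ts i) /\
  (forall (n : nat) (a : nat -> L0 -> K) (ts : nat -> T),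
      (forall i j, (i < n)%N -> (j < n)%N -> i <> j -> a i <> a j) ->
      (forall i, (i < n)%N -> Lam1z H (a i) /\ rootT H (a i) (ts i)) ->
      \sum_(i < n) ts i = 0 -> forall i, (i < n)%N -> ts i = 0) /\
  (forall x y z, rootT H f0 x -> rootT H f0 y -> rootT H f0 z -> tp x y z = 0) /\
  (forall f x y z, Lam1 H f -> rootT H f x -> rootT H (fopp f) y -> rootT H f0 z ->
      tp x y z = 0).

Definition symmetricR (P : (L0 -> K) -> Prop) : Prop := forall f, P f -> P (fopp f).

(* a0 and b connected (indices shifted: a 0 = alpha_1, ..., a (2n) = alpha_{2n+1}) *)
Definition connected (H : L0 -> Prop) (a0 b : L0 -> K) : Prop :=
  exists (n : nat) (a : nat -> L0 -> K),
    (forall i, (i < (2 * n).+1)%N -> Lam1z H (a i)) /\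
    (forall k, (k <= n)%N -> Lam1 H (psum a (2 * k).+1)) /\
    (forall k, (1 <= k)%N -> (k <= n)%N -> Lam0 H (psum a (2 * k))) /\
    a 0%N = a0 /\
    (psum a (2 * n).+1 = b \/ psum a (2 * n).+1 = fopp b).

Definition Lam1conn (H : L0 -> Prop) (a0 b : L0 -> K) : Prop :=
  Lam1 H b /\ connected H a0 b.
Definition Lam1connz (H : L0 -> Prop) (a0 b : L0 -> K) : Prop :=
  b = f0 \/ Lam1conn H a0 b.

End LTS.

From mathcomp Require Import all_boot all_algebra.
From mathcomp Require Import ring zify.
From Stdlib Require Import Classical FunctionalExtensionality.
Import GRing.Theory.
Set Implicit Arguments. Unset Strict Implicit. Unset Printing Implicit Defensive.
Local Open Scope ring_scope.

(* Let a, b, c be root vectors for α, β, γ with x = {a, b, c} ≠ 0; x has weight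
   α + β + γ = 0.  The split axioms {T_0, T_0, T_0} = 0 and {T_λ, T_-λ, T_0} = 0
   force γ ≠ 0, and the nonzero tensor a ⊗ b puts -γ = α + β, hence γ, in Λ^0.
   The Leibniz identities expand a nonzero product of x with d ∈ T_δ and
   e ∈ T_ε into a signed sum of products, one of which is nonzero; it exhibits
   either a nonzero tensor between d or e and a root vector of a nonzero root λ
   already connected to α_0 (±γ, or δ once δ is done), or a nonzero vector of
   weight ν ∓ γ with ν ∈ {δ, ε}.  Both extend the connection to ν by one step,
   through the chains (λ, ν, -λ) and (±γ, 0, ν ∓ γ).  For
   δ + ε the product is itself a nonzero vector of that weight, and the nonzero
   tensor x ⊗ d, d ⊗ x or d ⊗ e of weight δ or δ + ε in Λ^0 connects δ + ε to δ. *)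

Section ZmodFacts.
Variable V : zmodType.

Lemma addr_neq0 (x y : V) : x + y <> 0 -> x <> 0 \/ y <> 0.
Proof. by have [->|] := eqVneq x 0; [rewrite add0r; right|move=> /eqP; left]. Qed.
Lemma subr_neq0 (x y : V) : x - y <> 0 -> x <> 0 \/ y <> 0.
Proof. by move=> /addr_neq0[|ny]; [left|right => y0; apply: ny; rewrite y0 oppr0]. Qed.
Lemma eq_of_subr_eq (x y u v : V) : x - y = u - v -> u = v -> x = y.
Proof. by move=> D uv; apply/eqP; rewrite -subr_eq0 D uv subrr. Qed.

End ZmodFacts.

(* An identity between sums and differences of atoms holds in every abelian
   group as soon as every atom has the same integer coefficient on both sides. *)
Inductive zterm := ZVar of nat | ZAdd of zterm & zterm | ZOpp of zterm | ZZero.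

Fixpoint zcoef (e : zterm) (i : nat) : int :=
  match e with
  | ZVar n => (n == i)%:Z
  | ZAdd a b => zcoef a i + zcoef b i
  | ZOpp a => - zcoef a i
  | ZZero => 0
  end.

Fixpoint zbounded (N : nat) (e : zterm) : bool :=
  match e with
  | ZVar n => (n < N)%N
  | ZAdd a b => zbounded N a && zbounded N b
  | ZOpp a => zbounded N a
  | ZZero => true
  end.

Section ZmodNormalization.
Variables (V : zmodType) (env : seq V).

Fixpoint zeval (e : zterm) : V :=
  match e with
  | ZVar n => nth 0 env n
  | ZAdd a b => zeval a + zeval b
  | ZOpp a => - zeval a
  | ZZero => 0
  end.

Lemma zeval_coef N e : zbounded N e ->
  zeval e = \sum_(i < N) nth 0 env i *~ zcoef e i.
Proof.
elim: e => [n|a IHa b IHb|a IHa|] /=.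
- move=> ltnN; rewrite (bigD1 (Ordinal ltnN)) //= eqxx mulr1z big1 ?addr0 //.
  move=> i neq_in; suff /negbTE -> : n != i by rewrite mulr0z.
  by apply: contra neq_in => /eqP eq_ni; apply/eqP/val_inj.
- by move=> /andP[/IHa -> /IHb ->]; rewrite -big_split; apply: eq_bigr => i _; rewrite mulrzDr.
- by move=> /IHa ->; rewrite -sumrN; apply: eq_bigr => i _; rewrite mulrNz.
- by move=> _; rewrite big1 // => i _; rewrite mulr0z.
Qed.

Lemma zeval_eq e1 e2 :
  [&& zbounded (size env) e1, zbounded (size env) e2 &
      all (fun i => zcoef e1 i == zcoef e2 i) (iota 0 (size env))] ->
  zeval e1 = zeval e2.
Proof.
case/and3P => /zeval_coef -> /zeval_coef -> /allP coefE.
by apply: eq_bigr => i _; rewrite (eqP (coefE i _)) // mem_iota ltn_ord.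
Qed.

End ZmodNormalization.

Ltac zinsert t env := lazymatch env with
  | nil => constr:(t :: nil)
  | (t :: _) => env
  | (?x :: ?r) => let r' := zinsert t r in constr:(x :: r')
  end.
Ltac zatoms t env := lazymatch t with
  | (?a + ?b)%R => let env := zatoms a env in zatoms b env
  | (- ?a)%R => zatoms a env
  | 0%R => env
  | _ => zinsert t env
  end.
Ltac zindex t env := lazymatch env with
  | (t :: _) => constr:(0%N)
  | (_ :: ?r) => let n := zindex t r in constr:(S n)
  end.
Ltac zreify t env := lazymatch t with
  | (?a + ?b)%R => let ra := zreify a env in let rb := zreify b env in constr:(ZAdd ra rb)
  | (- ?a)%R => let ra := zreify a env in constr:(ZOpp ra)
  | 0%R => constr:(ZZero)
  | _ => let n := zindex t env in constr:(ZVar n)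
  end.
Ltac zmodule := lazymatch goal with |- ?L = ?R =>
  let V := type of L in
  let env := zatoms L (@nil V) in let env := zatoms R env in
  let eL := zreify L env in let eR := zreify R env in
  change (zeval env eL = zeval env eR); apply: zeval_eq; vm_compute; reflexivity
  end.

Section TripleIdentities.
Variables (K : fieldType) (T : lmodType K) (tp : T -> T -> T -> T).
Hypothesis tpL : isLTS tp.

Lemma tpDl x x' y z : tp (x + x') y z = tp x y z + tp x' y z.
Proof. by have := tpL.1 1 x x' y z; rewrite !scale1r. Qed.
Lemma tpDm x y y' z : tp x (y + y') z = tp x y z + tp x y' z.
Proof. by have := tpL.2.1 1 x y y' z; rewrite !scale1r. Qed.
Lemma tpDr x y z z' : tp x y (z + z') = tp x y z + tp x y z'.
Proof. by have := tpL.2.2.1 1 x y z z'; rewrite !scale1r. Qed.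
Lemma tp0l y z : tp 0 y z = 0.
Proof. by apply/(addrI (tp 0 y z)); rewrite -tpDl !addr0. Qed.
Lemma tp0m x z : tp x 0 z = 0.
Proof. by apply/(addrI (tp x 0 z)); rewrite -tpDm !addr0. Qed.
Lemma tp0r x y : tp x y 0 = 0.
Proof. by apply/(addrI (tp x y 0)); rewrite -tpDr !addr0. Qed.
Lemma tpl_neq0 x y z : tp x y z <> 0 -> x <> 0.
Proof. by move=> nz x0; apply: nz; rewrite x0 tp0l. Qed.
Lemma tpm_neq0 x y z : tp x y z <> 0 -> y <> 0.
Proof. by move=> nz y0; apply: nz; rewrite y0 tp0m. Qed.
Lemma tpr_neq0 x y z : tp x y z <> 0 -> z <> 0.
Proof. by move=> nz z0; apply: nz; rewrite z0 tp0r. Qed.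
Lemma tpZl c x y z : tp (c *: x) y z = c *: tp x y z.
Proof. by have := tpL.1 c x 0 y z; rewrite !addr0 tp0l addr0. Qed.
Lemma tpZm c x y z : tp x (c *: y) z = c *: tp x y z.
Proof. by have := tpL.2.1 c x y 0 z; rewrite !addr0 tp0m addr0. Qed.
Lemma tpZr c x y z : tp x y (c *: z) = c *: tp x y z.
Proof. by have := tpL.2.2.1 c x y z 0; rewrite !addr0 tp0r addr0. Qed.
Lemma tpNl x y z : tp (- x) y z = - tp x y z.
Proof. by rewrite -scaleN1r tpZl scaleN1r. Qed.
Lemma tpNm x y z : tp x (- y) z = - tp x y z.
Proof. by rewrite -scaleN1r tpZm scaleN1r. Qed.
Lemma tpNr x y z : tp x y (- z) = - tp x y z.
Proof. by rewrite -scaleN1r tpZr scaleN1r. Qed.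

(* [ract p q z] is the product [z, p (x) q] of the standard embedding. *)
Definition ract (p q z : T) : T := tp z p q - tp z q p.

Lemma ractl_neq0 p q z : ract p q z <> 0 -> p <> 0.
Proof. by move=> nz p0; apply: nz; rewrite /ract p0 tp0m tp0r subrr. Qed.
Lemma ractr_neq0 p q z : ract p q z <> 0 -> z <> 0.
Proof. by move=> nz z0; apply: nz; rewrite /ract z0 !tp0l subrr. Qed.

Lemma ractD p q x y : ract p q (x + y) = ract p q x + ract p q y.
Proof. by rewrite /ract !tpDl; zmodule. Qed.

Lemma leibniz_m a b c d e : tp a (tp b c d) e =
  tp (tp a b c) d e - tp (tp a c b) d e - tp (tp a d b) c e + tp (tp a d c) b e.
Proof. exact: tpL.2.2.2.1. Qed.
Lemma leibniz_r a b c d e : tp a b (tp c d e) =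
  tp (tp a b c) d e - tp (tp a b d) c e - tp (tp a b e) c d + tp (tp a b e) d c.
Proof. exact: tpL.2.2.2.2. Qed.

Ltac tp_expand := rewrite /ract ?(tpDl, tpDm, tpDr, tpNl, tpNm, tpNr);
  rewrite ?(leibniz_m, leibniz_r); rewrite ?(tpDl, tpDm, tpDr, tpNl, tpNm, tpNr).

Lemma ract_tp u v x y z :
  ract u v (tp x y z) = tp (ract u v x) y z + tp x (ract u v y) z + tp x y (ract u v z).
Proof. by tp_expand; zmodule. Qed.
Lemma tp_tpl a b c d e :
  tp (tp a b c) d e = tp a b (tp c d e) + tp (tp a b d) c e + ract c d (tp a b e).
Proof. by tp_expand; zmodule. Qed.
Lemma tp_tpm a b c d e :
  tp d (tp a b c) e = tp (ract a b d) c e - (tp (tp d c a) b e - tp (tp d c b) a e).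
Proof. by tp_expand; zmodule. Qed.
Lemma tp_tpr a b c d e :
  tp d e (tp a b c) = tp (ract a b d) e c + tp d (ract a b e) c - ract a b (tp d e c).
Proof. by tp_expand; zmodule. Qed.
Lemma ract_tpl a b c d e :
  ract (tp a b c) e d = ract (tp a b e) c d + ract c e (ract a b d) - ract a b (ract c e d).
Proof. by tp_expand; zmodule. Qed.
Lemma ract_tpr a b c d e :
  ract d e (tp a b c) = tp (tp a b d) e c - tp (tp a b e) d c + tp a b (ract d e c).
Proof. by tp_expand; zmodule. Qed.
Lemma tp_pair_comm p q u v w :
  tp (tp p q u) v w - tp (tp p q v) u w = ract u v (tp p q w) - tp p q (ract u v w).
Proof. by tp_expand; zmodule. Qed.
Lemma ract_pair_comm p q u v z :
  ract (tp p q u) v z + ract (- tp p q v) u z = ract u v (ract p q z) - ract p q (ract u v z).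
Proof. by tp_expand; zmodule. Qed.

Lemma tp_swap p q r : tp p q r = tp p r q + ract q r p.
Proof. by rewrite /ract; zmodule. Qed.

End TripleIdentities.

Section RootSpaces.
Variables (K : fieldType) (T : lmodType K) (tp : T -> T -> T -> T).
Hypothesis tpL : isLTS tp.
Variable H : L0 T -> Prop.

Lemma actl_seq1 p q w : actl tp [:: (p, q)] w = tp p q w.
Proof. by rewrite /actl big_seq1. Qed.
Lemma actr_seq1 p q z : actr tp [:: (p, q)] z = ract tp p q z.
Proof. by rewrite /actr big_seq1. Qed.
Lemma actl_nil w : actl tp [::] w = 0.
Proof. by rewrite /actl big_nil. Qed.
Lemma actr_nil z : actr tp [::] z = 0.
Proof. by rewrite /actr big_nil. Qed.
Lemma actl_cons pq h w : actl tp (pq :: h) w = tp pq.1 pq.2 w + actl tp h w.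
Proof. by rewrite /actl big_cons. Qed.
Lemma actr_cons pq h z : actr tp (pq :: h) z = ract tp pq.1 pq.2 z + actr tp h z.
Proof. by rewrite /actr big_cons. Qed.

Lemma actrD h x y : actr tp h (x + y) = actr tp h x + actr tp h y.
Proof.
elim: h => [|pq h IH]; first by rewrite !actr_nil addr0.
by rewrite !actr_cons IH /ract !(tpDl tpL); zmodule.
Qed.
Lemma actrZ h c x : actr tp h (c *: x) = c *: actr tp h x.
Proof.
elim: h => [|pq h IH]; first by rewrite !actr_nil scaler0.
by rewrite !actr_cons IH /ract !(tpZl tpL) scalerDr scalerBr.
Qed.
Lemma actrN h x : actr tp h (- x) = - actr tp h x.
Proof. by rewrite -scaleN1r actrZ scaleN1r. Qed.

Lemma actr_tp h x y z : actr tp h (tp x y z) =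
  tp (actr tp h x) y z + tp x (actr tp h y) z + tp x y (actr tp h z).
Proof.
elim: h => [|pq h IH]; first by rewrite !actr_nil (tp0l tpL) (tp0m tpL) (tp0r tpL) !addr0.
by rewrite !actr_cons IH (ract_tp tpL) !(tpDl tpL, tpDm tpL, tpDr tpL); zmodule.
Qed.

Lemma brL_seq1_cons p q r h : brL tp [:: (p, q)] (r :: h) =
  [:: (tp p q r.1, r.2), (- tp p q r.2, r.1) & brL tp [:: (p, q)] h].
Proof. by rewrite /brL /= !cats0. Qed.

Lemma actl_brL_seq1 p q h w :
  actl tp (brL tp [:: (p, q)] h) w = actr tp h (tp p q w) - tp p q (actr tp h w).
Proof.
elim: h => [|r h IH]; first by rewrite /brL /= actl_nil !actr_nil (tp0r tpL) subrr.
rewrite brL_seq1_cons !actl_cons IH !actr_cons /= (tpDr tpL) (tpNl tpL).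
by apply: eq_of_subr_eq (tp_pair_comm tpL p q r.1 r.2 w); zmodule.
Qed.

Lemma actr_brL_seq1 p q h z :
  actr tp (brL tp [:: (p, q)] h) z = actr tp h (ract tp p q z) - ract tp p q (actr tp h z).
Proof.
elim: h => [|r h IH]; first by rewrite /brL /= !actr_nil /ract !(tp0l tpL) !subrr.
rewrite brL_seq1_cons !actr_cons IH /=.
apply: eq_of_subr_eq (ract_pair_comm tpL p q r.1 r.2 z).
by rewrite (ractD tpL); zmodule.
Qed.

Lemma rootT_tp f g k x y z : rootT tp H f x -> rootT tp H g y -> rootT tp H k z ->
  rootT tp H (fadd (fadd f g) k) (tp x y z).
Proof.
move=> rx ry rz h Hh; rewrite actr_tp rx // ry // rz //.
by rewrite (tpZl tpL) (tpZm tpL) (tpZr tpL) /fadd !scalerDl.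
Qed.
Lemma rootT_sub f x y : rootT tp H f x -> rootT tp H f y -> rootT tp H f (x - y).
Proof. by move=> rx ry h Hh; rewrite actrD actrN rx // ry // scalerBr. Qed.
Lemma rootT_ext f g t : (forall s, f s = g s) -> rootT tp H f t -> rootT tp H g t.
Proof. by move=> fg rt h Hh; rewrite rt // fg. Qed.
Lemma rootT_ract f g k p q z : rootT tp H f p -> rootT tp H g q -> rootT tp H k z ->
  rootT tp H (fadd (fadd k f) g) (ract tp p q z).
Proof.
move=> rp rq rz; apply: rootT_sub; first exact: rootT_tp.
by apply: (@rootT_ext (fadd (fadd k g) f)); [move=> s; rewrite /fadd; ring|exact: rootT_tp].
Qed.

Lemma rootL0_tensor f g p q : rootT tp H f p -> rootT tp H g q ->
  rootL0 tp H (fadd f g) [:: (p, q)].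
Proof.
move=> rp rq h Hh w; rewrite /scaleL /= actl_brL_seq1 actr_brL_seq1 actl_seq1 actr_seq1.
split.
  rewrite actr_tp rp // rq // /fadd !(tpZl tpL, tpZm tpL, tpDl tpL) !scalerDl; zmodule.
rewrite /ract actrD actrN !actr_tp !rp // !rq // /fadd.
rewrite !(tpZl tpL, tpZm tpL, tpZr tpL, tpDl tpL, tpDm tpL, tpDr tpL) !scalerDl ?scalerBr.
zmodule.
Qed.

Definition tensor_nz (p q : T) : Prop := ~ zeroL tp [:: (p, q)].

Lemma tensor_nz_tp p q w : tp p q w <> 0 -> tensor_nz p q.
Proof. by move=> nz /(_ w) [+ _]; rewrite actl_seq1 actl_nil. Qed.
Lemma tensor_nz_ract p q z : ract tp p q z <> 0 -> tensor_nz p q.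
Proof. by move=> nz /(_ z) [_]; rewrite actr_seq1 actr_nil. Qed.

End RootSpaces.

Ltac funring := apply: functional_extensionality => ?; rewrite /fadd /fopp /f0 /=; ring.

Section Connectivity.
Variables (K : fieldType) (T : lmodType K) (tp : T -> T -> T -> T).
Hypothesis tpL : isLTS tp.
Variable H : L0 T -> Prop.
Hypothesis Lam1_sym : symmetricR (Lam1 tp H).
Hypothesis Lam0_sym : symmetricR (Lam0 tp H).
Variable a0 : L0 T -> K.

Local Notation F0 := (@f0 K T).
Local Notation connz := (Lam1connz tp H a0).

Lemma isDual_f0 : isDual tp H F0.
Proof. by split; [|split] => *; rewrite /f0 ?mulr0 ?addr0. Qed.
Lemma isDual_add f g : isDual tp H f -> isDual tp H g -> isDual tp H (fadd f g).
Proof.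
move=> [f_out [f_eq f_lin]] [g_out [g_eq g_lin]]; split; [|split].
- by move=> s Hs; rewrite /fadd f_out // g_out // addr0.
- by move=> s s' Hs E; rewrite /fadd (f_eq s s') // (g_eq s s').
- by move=> c s s' Hs Hs'; rewrite /fadd f_lin // g_lin //; ring.
Qed.
Lemma isDual_opp f : isDual tp H f -> isDual tp H (fopp f).
Proof.
move=> [f_out [f_eq f_lin]]; split; [|split].
- by move=> s Hs; rewrite /fopp f_out // oppr0.
- by move=> s s' Hs E; rewrite /fopp (f_eq s s').
- by move=> c s s' Hs Hs'; rewrite /fopp f_lin //; ring.
Qed.
Lemma Lam1z_isDual f : Lam1z tp H f -> isDual tp H f.
Proof. by case=> [->|[]]; [exact: isDual_f0|]. Qed.

Lemma Lam1z_root f t : isDual tp H f -> t <> 0 -> rootT tp H f t -> Lam1z tp H f.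
Proof.
move=> f_dual t_nz rt; have [->|f_nz] := classic (f = F0); [by left|right].
by split=> //; split=> //; exists t.
Qed.
Lemma Lam0_tensor f g p q : isDual tp H f -> isDual tp H g -> fadd f g <> F0 ->
  rootT tp H f p -> rootT tp H g q -> tensor_nz tp p q -> Lam0 tp H (fadd f g).
Proof.
move=> f_dual g_dual fg_nz rp rq pq_nz; split; first exact: isDual_add.
by split=> //; exists [:: (p, q)]; split=> //; exact: rootL0_tensor.
Qed.

Lemma add0f (f : L0 T -> K) : fadd F0 f = f.
Proof. funring. Qed.
Lemma addf0 (f : L0 T -> K) : fadd f F0 = f.
Proof. funring. Qed.
Lemma fopp_f0 : fopp F0 = F0.
Proof. funring. Qed.
Lemma foppK (f : L0 T -> K) : fopp (fopp f) = f.
Proof. funring. Qed.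
Lemma fopp_neq0 (f : L0 T -> K) : f <> F0 -> fopp f <> F0.
Proof. by move=> f_nz f0E; apply: f_nz; rewrite -[f]foppK f0E fopp_f0. Qed.
Lemma fadd_eq0 (f g : L0 T -> K) : fadd f g = F0 -> g = fopp f.
Proof.
move=> fg0; apply: functional_extensionality => s; move/(congr1 (fun F => F s)): fg0.
by rewrite /fadd /fopp /f0 => /eqP; rewrite addrC addr_eq0 => /eqP.
Qed.
Lemma Lam1z_opp f : Lam1z tp H f -> Lam1z tp H (fopp f).
Proof. by case=> [->|/Lam1_sym f_root]; [left; exact: fopp_f0|right]. Qed.

Lemma psum_eq (a a' : nat -> L0 T -> K) m :
  (forall i, (i < m)%N -> a' i = a i) -> psum a' m = psum a m.
Proof.
by move=> aa'; apply: functional_extensionality => s; apply: eq_bigr => i _; rewrite aa'.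
Qed.
Lemma psumS (a : nat -> L0 T -> K) m : psum a m.+1 = fadd (psum a m) (a m).
Proof. by apply: functional_extensionality => s; rewrite /psum /fadd big_ord_recr. Qed.

Definition conn_chain (n : nat) (a : nat -> L0 T -> K) : Prop :=
  [/\ forall i, (i < (2 * n).+1)%N -> Lam1z tp H (a i),
      forall k, (k <= n)%N -> Lam1 tp H (psum a (2 * k).+1) &
      forall k, (1 <= k)%N -> (k <= n)%N -> Lam0 tp H (psum a (2 * k))].

Lemma conn_chain_snoc n a nu rho : conn_chain n a -> Lam1z tp H nu -> Lam1z tp H rho ->
  Lam0 tp H (fadd (psum a (2 * n).+1) nu) ->
  Lam1 tp H (fadd (fadd (psum a (2 * n).+1) nu) rho) ->
  exists2 a', conn_chain n.+1 a' &
    a' 0%N = a 0%N /\ psum a' (2 * n.+1).+1 = fadd (fadd (psum a (2 * n).+1) nu) rho.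
Proof.
move=> [a_root odd_root even_root] nu_root rho_root Lam0_nu Lam1_rho.
pose a' i := if (i < (2 * n).+1)%N then a i else if i == (2 * n).+1 then nu else rho.
have psum_a' m : (m <= (2 * n).+1)%N -> psum a' m = psum a m.
  by move=> le_m; apply: psum_eq => i lt_im; rewrite /a' (leq_trans lt_im le_m).
have psum_even : psum a' (2 * n.+1) = fadd (psum a (2 * n).+1) nu.
  by rewrite mulnS add2n psumS psum_a' // /a' ltnn eqxx.
have psum_odd : psum a' (2 * n.+1).+1 = fadd (fadd (psum a (2 * n).+1) nu) rho.
  by rewrite psumS psum_even /a' mulnS add2n ltnS ltnNge leqnSn /= eqn_leq ltnn.
exists a'; split=> //.
- move=> i _; rewrite /a'; case: ifP => [lt_i|_]; first exact: a_root.
  by case: ifP.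
- move=> k; rewrite leq_eqVlt ltnS => /orP[/eqP -> |le_kn]; first by rewrite psum_odd.
  by rewrite psum_a'; [exact: odd_root|lia].
- move=> k k_gt0; rewrite leq_eqVlt ltnS => /orP[/eqP -> |le_kn]; first by rewrite psum_even.
  by rewrite psum_a'; [exact: even_root|lia].
Qed.

Lemma connected_ext lam nu rho : connected tp H a0 lam -> Lam1z tp H nu -> Lam1z tp H rho ->
  Lam0 tp H (fadd lam nu) -> Lam1 tp H (fadd (fadd lam nu) rho) ->
  connected tp H a0 (fadd (fadd lam nu) rho).
Proof.
move=> [n [a [a_root [odd_root [even_root [a_0 end_lam]]]]]] nu_root rho_root.
have chain_a : conn_chain n a by [].
case: end_lam => [<-|end_lam] Lam0_nu Lam1_rho.
  have [a' [? ? ?] [a'_0 end_a']] := conn_chain_snoc chain_a nu_root rho_root Lam0_nu Lam1_rho.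
  by exists n.+1, a'; do !split=> //; [rewrite a'_0|left].
have {end_lam}Elam : lam = fopp (psum a (2 * n).+1) by rewrite end_lam foppK.
subst lam.
move: Lam0_nu Lam1_rho => /Lam0_sym Lam0_nu /Lam1_sym Lam1_rho.
have Enu : fopp (fadd (fopp (psum a (2 * n).+1)) nu) = fadd (psum a (2 * n).+1) (fopp nu).
  by funring.
have Erho : fopp (fadd (fadd (fopp (psum a (2 * n).+1)) nu) rho) =
            fadd (fadd (psum a (2 * n).+1) (fopp nu)) (fopp rho) by funring.
rewrite Enu in Lam0_nu; rewrite Erho in Lam1_rho.
have [a' [? ? ?] [a'_0 end_a']] := conn_chain_snoc chain_a (Lam1z_opp nu_root)
  (Lam1z_opp rho_root) Lam0_nu Lam1_rho.
by exists n.+1, a'; do !split=> //; [rewrite a'_0|right; rewrite end_a' -Erho].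
Qed.

Lemma connz_isDual f : connz f -> isDual tp H f.
Proof. by case=> [->|[[]]]; [exact: isDual_f0|]. Qed.
Lemma connz_Lam1z f : connz f -> Lam1z tp H f.
Proof. by case=> [->|[]]; [left|right]. Qed.
Lemma connz_Lam1 f : connz f -> f <> F0 -> Lam1 tp H f.
Proof. by case=> [->|[]]. Qed.
Lemma connz_opp f : connz f -> connz (fopp f).
Proof.
case=> [->|[f_root [n [a [? [? [? [? end_f]]]]]]]]; first by rewrite fopp_f0; left.
right; split; first exact: Lam1_sym.
by exists n, a; do !split=> //; rewrite foppK; case: end_f; [right|left].
Qed.

Lemma connz_ext lam nu rho : connz lam -> lam <> F0 -> Lam1z tp H nu -> Lam1z tp H rho ->
  Lam0 tp H (fadd lam nu) -> Lam1z tp H (fadd (fadd lam nu) rho) ->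
  connz (fadd (fadd lam nu) rho).
Proof.
move=> lam_conn lam_nz nu_root rho_root Lam0_nu [->|Lam1_rho]; first by left.
by right; split=> //; apply: connected_ext; case: lam_conn => [//|[]].
Qed.

Lemma connz_addr mu rho : connz mu -> Lam0 tp H mu -> Lam1z tp H rho ->
  Lam1z tp H (fadd mu rho) -> connz (fadd mu rho).
Proof.
move=> mu_conn Lam0_mu rho_root; have [_ [mu_nz _]] := Lam0_mu.
have := @connz_ext mu F0 rho mu_conn mu_nz (or_introl erefl) rho_root.
by rewrite addf0; apply.
Qed.

Lemma connz_shift mu nu t : connz mu -> Lam0 tp H mu -> Lam1z tp H nu ->
  t <> 0 -> rootT tp H (fadd nu (fopp mu)) t -> connz nu.
Proof.
move=> mu_conn Lam0_mu nu_root t_nz rt.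
have Enu : fadd mu (fadd nu (fopp mu)) = nu by funring.
rewrite -Enu; apply: connz_addr => //; last by rewrite Enu.
exact: Lam1z_root (isDual_add (Lam1z_isDual nu_root) (isDual_opp (connz_isDual mu_conn))) t_nz rt.
Qed.

Lemma connz_tensor lam nu p q : connz lam -> lam <> F0 -> Lam1z tp H nu ->
  rootT tp H lam p -> rootT tp H nu q -> tensor_nz tp p q \/ tensor_nz tp q p -> connz nu.
Proof.
move=> lam_conn lam_nz nu_root rp rq pq_nz.
have lam_dual := connz_isDual lam_conn; have nu_dual := Lam1z_isDual nu_root.
have [lam_nu_0|lam_nu_nz] := classic (fadd lam nu = F0).
  by rewrite (fadd_eq0 lam_nu_0); exact: connz_opp.
have Lam0_nu : Lam0 tp H (fadd lam nu).
  case: pq_nz => [pq_nz|qp_nz]; first exact: Lam0_tensor lam_dual nu_dual lam_nu_nz rp rq pq_nz.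
  have Ecomm : fadd nu lam = fadd lam nu by funring.
  rewrite -Ecomm in lam_nu_nz *.
  exact: Lam0_tensor nu_dual lam_dual lam_nu_nz rq rp qp_nz.
have Enu : fadd (fadd lam nu) (fopp lam) = nu by funring.
rewrite -Enu; apply: connz_ext => //; first exact: Lam1z_opp (connz_Lam1z lam_conn).
by rewrite Enu.
Qed.

Lemma connzD_tensor f g p q t : connz f -> f <> F0 -> Lam1z tp H g ->
  rootT tp H f p -> rootT tp H g q -> tensor_nz tp p q ->
  t <> 0 -> rootT tp H (fadd f g) t -> connz (fadd f g).
Proof.
move=> f_conn f_nz g_root rp rq pq_nz t_nz rt.
have fg_dual := isDual_add (connz_isDual f_conn) (Lam1z_isDual g_root).
have [->|fg_nz] := classic (fadd f g = F0); first by left.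
rewrite -[fadd f g]addf0; apply: connz_ext => //; first by left.
  exact: Lam0_tensor (connz_isDual f_conn) (Lam1z_isDual g_root) fg_nz rp rq pq_nz.
by rewrite addf0; exact: Lam1z_root fg_dual t_nz rt.
Qed.

End Connectivity.

Section ZeroWeightProduct.
Variables (K : fieldType) (T : lmodType K) (tp : T -> T -> T -> T).
Hypothesis tpL : isLTS tp.
Variable H : L0 T -> Prop.
Hypothesis split_H : isSplit tp H.
Hypothesis Lam1_sym : symmetricR (Lam1 tp H).
Hypothesis Lam0_sym : symmetricR (Lam0 tp H).
Variables (a0 al be ga : L0 T -> K).

Local Notation F0 := (@f0 K T).
Local Notation connz := (Lam1connz tp H a0).

Hypotheses (al_conn : connz al) (be_conn : connz be) (ga_conn : connz ga).
Hypothesis sum0 : fadd (fadd al be) ga = F0.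
Variables (a b c : T).
Hypotheses (ra : rootT tp H al a) (rb : rootT tp H be b) (rc : rootT tp H ga c).
Hypothesis abc_nz : tp a b c <> 0.

Lemma gaE s : ga s = - (al s + be s).
Proof. by rewrite (fadd_eq0 sum0). Qed.

Ltac weights := move=> ?; rewrite /fadd /fopp /f0 ?gaE; ring.

Lemma root0_abc : rootT tp H F0 (tp a b c).
Proof. by rewrite -sum0; exact: rootT_tp. Qed.

Lemma ga_neq0 : ga <> F0.
Proof.
move=> ga0; apply: abc_nz; have [_ [_ [T000 Tpm0]]] := split_H.
have rc0 : rootT tp H F0 c by rewrite -ga0.
have be_opp : be = fopp al by apply: fadd_eq0; rewrite -[fadd al be]addf0 -{1}ga0.
have rb' : rootT tp H (fopp al) b by rewrite -be_opp.
have [al0|al_nz] := classic (al = F0).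
  by apply: T000 rc0; [rewrite -al0|rewrite -fopp_f0 -al0].
exact: (Tpm0 _ _ _ _ (connz_Lam1 al_conn al_nz) ra rb' rc0).
Qed.

Lemma Lam0_ga : Lam0 tp H ga.
Proof.
have ab_ga : fadd al be = fopp ga by rewrite (fadd_eq0 sum0) foppK.
rewrite -[ga]foppK; apply: Lam0_sym; rewrite -ab_ga.
apply: (Lam0_tensor tpL (connz_isDual al_conn) (connz_isDual be_conn) _ ra rb
  (tensor_nz_tp abc_nz)).
by rewrite ab_ga; exact: (fopp_neq0 ga_neq0).
Qed.

Lemma connz_sub_ga nu f t : Lam1z tp H nu -> t <> 0 -> rootT tp H f t ->
  (forall s, f s = nu s - ga s) -> connz nu.
Proof.
move=> nu_root t_nz rt fE.
apply: (connz_shift Lam1_sym Lam0_sym ga_conn Lam0_ga nu_root t_nz).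
exact: (rootT_ext fE rt).
Qed.

Lemma connz_add_ga nu f t : Lam1z tp H nu -> t <> 0 -> rootT tp H f t ->
  (forall s, f s = nu s + ga s) -> connz nu.
Proof.
move=> nu_root t_nz rt fE.
have Lam0_opp_ga : Lam0 tp H (fopp ga) by exact: Lam0_sym Lam0_ga.
apply: (connz_shift Lam1_sym Lam0_sym (connz_opp Lam1_sym ga_conn) Lam0_opp_ga nu_root t_nz).
by apply: (rootT_ext _ rt) => s; rewrite fE /fadd /fopp opprK.
Qed.

Lemma connz_ga_tensor nu p q : Lam1z tp H nu -> rootT tp H ga p -> rootT tp H nu q ->
  tensor_nz tp p q \/ tensor_nz tp q p -> connz nu.
Proof. exact: (connz_tensor tpL Lam1_sym Lam0_sym ga_conn ga_neq0). Qed.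

Lemma connz_opp_ga_tensor nu p q : Lam1z tp H nu -> rootT tp H (fopp ga) p ->
  rootT tp H nu q -> tensor_nz tp p q \/ tensor_nz tp q p -> connz nu.
Proof.
exact: (connz_tensor tpL Lam1_sym Lam0_sym (connz_opp Lam1_sym ga_conn) (fopp_neq0 ga_neq0)).
Qed.

Lemma Lam0_abc_tensor nu d : nu <> F0 -> Lam1z tp H nu -> rootT tp H nu d ->
  tensor_nz tp (tp a b c) d \/ tensor_nz tp d (tp a b c) -> Lam0 tp H nu.
Proof.
move=> nu_nz nu_root rd [xd_nz|dx_nz].
  rewrite -[nu]add0f in nu_nz *.
  exact: (Lam0_tensor tpL (isDual_f0 tp H) (Lam1z_isDual nu_root) nu_nz root0_abc rd xd_nz).
rewrite -[nu]addf0 in nu_nz *.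
exact: (Lam0_tensor tpL (Lam1z_isDual nu_root) (isDual_f0 tp H) nu_nz rd root0_abc dx_nz).
Qed.

Section Pair.
Variables (de ep : L0 T -> K) (d e : T).
Hypotheses (de_root : Lam1z tp H de) (ep_root : Lam1z tp H ep).
Hypotheses (rd : rootT tp H de d) (re : rootT tp H ep e).

Lemma connz_pair : tensor_nz tp d e ->
  [/\ connz de \/ connz ep, de = F0 -> connz ep & ep = F0 -> connz de] ->
  connz de /\ connz ep.
Proof.
move=> de_nz [[de_conn|ep_conn] de0 ep0].
  split=> //; have [/de0 //|de_nz'] := classic (de = F0).
  exact: (connz_tensor tpL Lam1_sym Lam0_sym de_conn de_nz' ep_root rd re (or_introl de_nz)).
split=> //; have [/ep0 //|ep_nz] := classic (ep = F0).
exact: (connz_tensor tpL Lam1_sym Lam0_sym ep_conn ep_nz de_root re rd (or_intror de_nz)).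
Qed.

Lemma tpr_connz_pair : tp d e (tp a b c) <> 0 -> connz de /\ connz ep.
Proof.
move=> nz; apply: (connz_pair (tensor_nz_tp nz)).
move: nz; rewrite (tp_tpr tpL) => /subr_neq0[/addr_neq0[nz|nz]|nz].
- have ru : rootT tp H (fadd (fadd de al) be) (ract tp a b d) := rootT_ract tpL ra rb rd.
  have de_conn : connz de by apply: (connz_sub_ga de_root (tpl_neq0 tpL nz) ru); weights.
  split; [by left|move=> de0|by []].
  apply: (connz_opp_ga_tensor ep_root _ re (or_introl (tensor_nz_tp nz))).
  by apply: (rootT_ext _ ru); rewrite de0; weights.
- have rv : rootT tp H (fadd (fadd ep al) be) (ract tp a b e) := rootT_ract tpL ra rb re.
  have ep_conn : connz ep by apply: (connz_sub_ga ep_root (tpm_neq0 tpL nz) rv); weights.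
  split; [by right|by []|move=> ep0].
  apply: (connz_opp_ga_tensor de_root _ rd (or_intror (tensor_nz_tp nz))).
  by apply: (rootT_ext _ rv); rewrite ep0; weights.
- have {}nz := ractr_neq0 tpL nz; have rt := rootT_tp tpL rd re rc.
  split; last first.
  + by move=> ep0; apply: (connz_add_ga de_root nz rt); rewrite ep0; weights.
  + by move=> de0; apply: (connz_add_ga ep_root nz rt); rewrite de0; weights.
  move: nz; rewrite (tp_swap tp d e c) => /addr_neq0[nz|nz].
    by left; exact: (connz_ga_tensor de_root rc rd (or_intror (tensor_nz_tp nz))).
  by right; exact: (connz_ga_tensor ep_root rc re (or_intror (tensor_nz_ract nz))).
Qed.

Lemma tpr_connzD : tp d e (tp a b c) <> 0 -> connz (fadd de ep).
Proof.
move=> nz; have [de_conn ep_conn] := tpr_connz_pair nz.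
have [de0|de_nz] := classic (de = F0); first by rewrite de0 add0f.
apply: (connzD_tensor tpL Lam1_sym Lam0_sym de_conn de_nz ep_root rd re (tensor_nz_tp nz) nz _).
by rewrite -[fadd de ep]addf0; exact: (rootT_tp tpL rd re root0_abc).
Qed.

End Pair.

Lemma tpl_connz_l de ep d e : Lam1z tp H de -> rootT tp H de d -> rootT tp H ep e ->
  tp (tp a b c) d e <> 0 -> connz de.
Proof.
move=> de_root rd re; rewrite (tp_tpl tpL) => /addr_neq0[/addr_neq0[nz|nz]|nz].
- exact: (connz_ga_tensor de_root rc rd (or_introl (tensor_nz_tp (tpr_neq0 tpL nz)))).
- apply: (connz_sub_ga de_root (tpl_neq0 tpL nz) (rootT_tp tpL ra rb rd) _); weights.
- exact: (connz_ga_tensor de_root rc rd (or_introl (tensor_nz_ract nz))).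
Qed.

Lemma tpl_connz_r de ep d e : Lam1z tp H de -> Lam1z tp H ep ->
  rootT tp H de d -> rootT tp H ep e -> tp (tp a b c) d e <> 0 -> connz ep.
Proof.
move=> de_root ep_root rd re nz.
have [de0|de_nz] := classic (de = F0); last first.
  have de_conn := tpl_connz_l de_root rd re nz.
  move: nz; rewrite (tp_swap tp) => /addr_neq0[nz|nz]; first exact: tpl_connz_l re rd nz.
  apply: (connz_tensor tpL Lam1_sym Lam0_sym de_conn de_nz ep_root rd re).
  exact: or_introl (tensor_nz_ract nz).
move: nz; rewrite (tp_swap tp) => /addr_neq0[nz|]; first exact: tpl_connz_l re rd nz.
rewrite (ract_tpr tpL) => /addr_neq0[/subr_neq0[nz|nz]|nz].
- apply: (connz_opp_ga_tensor ep_root _ re (or_introl (tensor_nz_tp nz))).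
  by apply: (rootT_ext _ (rootT_tp tpL ra rb rd)); rewrite de0; weights.
- apply: (connz_sub_ga ep_root (tpl_neq0 tpL nz) (rootT_tp tpL ra rb re) _); weights.
- move: (tpr_neq0 tpL nz); rewrite /ract => /subr_neq0[nz'|nz'].
    by apply: (connz_add_ga ep_root nz' (rootT_tp tpL rc rd re) _); rewrite de0; weights.
  exact: (connz_ga_tensor ep_root rc re (or_introl (tensor_nz_tp nz'))).
Qed.

Lemma tpl_connzD de ep d e : Lam1z tp H de -> Lam1z tp H ep ->
  rootT tp H de d -> rootT tp H ep e -> tp (tp a b c) d e <> 0 -> connz (fadd de ep).
Proof.
move=> de_root ep_root rd re nz.
have [de0|de_nz] := classic (de = F0).
  by rewrite de0 add0f; apply: tpl_connz_r de_root ep_root rd re nz.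
have Lam0_de := Lam0_abc_tensor de_nz de_root rd (or_introl (tensor_nz_tp nz)).
apply: (connz_addr Lam1_sym Lam0_sym (tpl_connz_l de_root rd re nz) Lam0_de ep_root _).
apply: (Lam1z_root (isDual_add (Lam1z_isDual de_root) (Lam1z_isDual ep_root)) nz _).
by apply: (rootT_ext _ (rootT_tp tpL root0_abc rd re)); weights.
Qed.

Lemma tpm_connz_l de ep d e : Lam1z tp H de -> rootT tp H de d -> rootT tp H ep e ->
  tp d (tp a b c) e <> 0 -> connz de.
Proof.
move=> de_root rd re; rewrite (tp_tpm tpL) => /subr_neq0[nz|/subr_neq0[nz|nz]].
- apply: (connz_sub_ga de_root (tpl_neq0 tpL nz) (rootT_ract tpL ra rb rd) _); weights.
- move/(tpl_neq0 tpL)/tensor_nz_tp: nz => dc_nz.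
  exact: (connz_ga_tensor de_root rc rd (or_intror dc_nz)).
- move/(tpl_neq0 tpL)/tensor_nz_tp: nz => dc_nz.
  exact: (connz_ga_tensor de_root rc rd (or_intror dc_nz)).
Qed.

Lemma tpm_connz_r de ep d e : Lam1z tp H de -> Lam1z tp H ep ->
  rootT tp H de d -> rootT tp H ep e -> tp d (tp a b c) e <> 0 -> connz ep.
Proof.
move=> de_root ep_root rd re; rewrite (tp_swap tp) => /addr_neq0[nz|].
  exact: (tpr_connz_pair de_root ep_root rd re nz).2.
rewrite (ract_tpl tpL) => /subr_neq0[/addr_neq0[nz|nz]|nz].
- apply: (connz_sub_ga ep_root (ractl_neq0 tpL nz) (rootT_tp tpL ra rb re) _); weights.
- exact: (connz_ga_tensor ep_root rc re (or_introl (tensor_nz_ract nz))).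
- exact: (connz_ga_tensor ep_root rc re (or_introl (tensor_nz_ract (ractr_neq0 tpL nz)))).
Qed.

Lemma tpm_connzD de ep d e : Lam1z tp H de -> Lam1z tp H ep ->
  rootT tp H de d -> rootT tp H ep e -> tp d (tp a b c) e <> 0 -> connz (fadd de ep).
Proof.
move=> de_root ep_root rd re nz.
have [de0|de_nz] := classic (de = F0).
  by rewrite de0 add0f; apply: tpm_connz_r de_root ep_root rd re nz.
have Lam0_de := Lam0_abc_tensor de_nz de_root rd (or_intror (tensor_nz_tp nz)).
apply: (connz_addr Lam1_sym Lam0_sym (tpm_connz_l de_root rd re nz) Lam0_de ep_root _).
apply: (Lam1z_root (isDual_add (Lam1z_isDual de_root) (Lam1z_isDual ep_root)) nz _).
by apply: (rootT_ext _ (rootT_tp tpL rd root0_abc re)); weights.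
Qed.

Lemma tpl_connz de ep d e : Lam1z tp H de -> Lam1z tp H ep ->
  rootT tp H de d -> rootT tp H ep e -> tp (tp a b c) d e <> 0 ->
  connz de /\ connz ep /\ connz (fadd de ep).
Proof.
move=> de_root ep_root rd re nz; split; first exact: (tpl_connz_l de_root rd re nz).
split; first exact: (tpl_connz_r de_root ep_root rd re nz).
exact: (tpl_connzD de_root ep_root rd re nz).
Qed.

Lemma tpm_connz de ep d e : Lam1z tp H de -> Lam1z tp H ep ->
  rootT tp H de d -> rootT tp H ep e -> tp d (tp a b c) e <> 0 ->
  connz de /\ connz ep /\ connz (fadd de ep).
Proof.
move=> de_root ep_root rd re nz; split; first exact: (tpm_connz_l de_root rd re nz).
split; first exact: (tpm_connz_r de_root ep_root rd re nz).
exact: (tpm_connzD de_root ep_root rd re nz).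
Qed.

Lemma tpr_connz de ep d e : Lam1z tp H de -> Lam1z tp H ep ->
  rootT tp H de d -> rootT tp H ep e -> tp d e (tp a b c) <> 0 ->
  connz de /\ connz ep /\ connz (fadd de ep).
Proof.
move=> de_root ep_root rd re nz; have [de_conn ep_conn] := tpr_connz_pair de_root ep_root rd re nz.
by split=> //; split=> //; exact: (tpr_connzD de_root ep_root rd re nz).
Qed.

End ZeroWeightProduct.

Theorem lemma3p4 (K : fieldType) (T : lmodType K) (tp : T -> T -> T -> T)
    (H : L0 T -> Prop) (a0 al be ga de ep : L0 T -> K) :
  isLTS tp -> maxAbSub tp H -> isSplit tp H ->
  symmetricR (Lam1 tp H) -> symmetricR (Lam0 tp H) ->
  Lam1 tp H a0 ->
  Lam1connz tp H a0 al -> Lam1connz tp H a0 be -> Lam1connz tp H a0 ga ->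
  fadd (fadd al be) ga = @f0 K T ->
  Lam1z tp H de -> Lam1z tp H ep ->
  let concl := Lam1connz tp H a0 de /\ Lam1connz tp H a0 ep /\
               Lam1connz tp H a0 (fadd de ep) in
  ((exists a b c d e, rootT tp H al a /\ rootT tp H be b /\ rootT tp H ga c /\
       rootT tp H de d /\ rootT tp H ep e /\ tp (tp a b c) d e <> 0) -> concl) /\
  ((exists a b c d e, rootT tp H al a /\ rootT tp H be b /\ rootT tp H ga c /\
       rootT tp H de d /\ rootT tp H ep e /\ tp d (tp a b c) e <> 0) -> concl) /\
  ((exists a b c d e, rootT tp H al a /\ rootT tp H be b /\ rootT tp H ga c /\
       rootT tp H de d /\ rootT tp H ep e /\ tp d e (tp a b c) <> 0) -> concl).
Proof.
move=> tpL _ split_H Lam1_sym Lam0_sym _ al_conn be_conn ga_conn sum0 de_root ep_root concl.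
split; [|split] => -[a [b [c [d [e [ra [rb [rc [rd [re nz]]]]]]]]]].
- exact: (tpl_connz tpL split_H Lam1_sym Lam0_sym al_conn be_conn ga_conn sum0
    ra rb rc (tpl_neq0 tpL nz) de_root ep_root rd re nz).
- exact: (tpm_connz tpL split_H Lam1_sym Lam0_sym al_conn be_conn ga_conn sum0
    ra rb rc (tpm_neq0 tpL nz) de_root ep_root rd re nz).
- exact: (tpr_connz tpL split_H Lam1_sym Lam0_sym al_conn be_conn ga_conn sum0
    ra rb rc (tpr_neq0 tpL nz) de_root ep_root rd re nz).
Qed.
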